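(* Let $\kappa=\frac4{27}$ and let $a,b,c,d>0$. Then the recurrence coefficients defined in the context satisfy $\beta_n=3\kappa$, $\alpha_{n+1}=3\kappa^2$ and $\gamma_{n+1}=\kappa^3$ for all integers $n\ge1$ (i.e. the Jacobi matrix coincides with the banded Toeplitz matrix with diagonals $1,3\kappa,3\kappa^2,\kappa^3$ except possibly in its first column) if and only if $(a,b,c,d)$ is one of the twelve tuples $(\frac13,\frac23,\frac12,1)$, $(\frac23,\frac13,\frac12,1)$, $(\frac13,\frac23,1,\frac32)$, $(\frac23,\frac13,1,\frac32)$, $(\frac23,\frac43,1,\frac32)$, $(\frac43,\frac23,1,\frac32)$, $(\frac23,\frac43,\frac32,2)$, $(\frac43,\frac23,\frac32,2)$, $(\frac43,\frac53,\frac32,2)$, $(\frac53,\frac43,\frac32,2)$, $(\frac43,\frac53,2,\frac52)$, $(\frac53,\frac43,2,\frac52)$.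
   Context: Let $c_{-1}=c$ and for $k\ge0$ $c_{2k}=d+k$, $c_{2k+1}=c+k+1$. Put $\lambda_0=\lambda_1=0$, and for $n\ge1$: $\lambda_{3n}=\frac{n(b+n-1)(c_n-a-1)}{(c_n+n-2)(c_n+n-1)(c_{n-1}+n-1)}$, $\lambda_{3n+1}=\frac{n(a+n)(c_{n-1}-b)}{(c_n+n-1)(c_{n-1}+n-1)(c_{n-1}+n)}$; for $n\ge0$: $\lambda_{3n+2}=\frac{(a+n)(b+n)(c_n-1)}{(c_n+n-1)(c_n+n)(c_{n-1}+n)}$. For $n\ge0$: $\beta_n=\lambda_{3n}+\lambda_{3n+1}+\lambda_{3n+2}$, $\alpha_{n+1}=(\lambda_{3n+1}+\lambda_{3n+2})\lambda_{3n+3}+\lambda_{3n+2}\lambda_{3n+4}$, $\gamma_{n+1}=\lambda_{3n+2}\lambda_{3n+4}\lambda_{3n+6}$. These are the entries of the Jacobi matrix $J$ ($J_{n,n+1}=1$, $J_{n,n}=\beta_n$, $J_{n+1,n}=\alpha_{n+1}$, $J_{n+2,n}=\gamma_{n+1}$) of the hypergeometric multiple orthogonal polynomials with parameters $(a,b,c,d)$. *)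

From Stdlib Require Import Reals Lra Lia Arith.
Open Scope R_scope.

Definition cseq (c d : R) (n : nat) : R :=
  if Nat.even n then d + INR (Nat.div2 n) else c + INR (Nat.div2 n) + 1.

(* cprev c d n = c_{n-1}, with c_{-1} = c. *)
Definition cprev (c d : R) (n : nat) : R :=
  match n with
  | O => c
  | S m => cseq c d m
  end.

Definition lam (a b c d : R) (k : nat) : R :=
  let n := (k / 3)%nat in
  let N := INR n in
  let cn := cseq c d n in
  let cp := cprev c d n in
  match (k mod 3)%nat with
  | O => if Nat.eqb n 0 then 0
         else N * (b + N - 1) * (cn - a - 1)
              / ((cn + N - 2) * (cn + N - 1) * (cp + N - 1))
  | 1%nat => if Nat.eqb n 0 then 0
         else N * (a + N) * (cp - b)
              / ((cn + N - 1) * (cp + N - 1) * (cp + N))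
  | _ => (a + N) * (b + N) * (cn - 1)
              / ((cn + N - 1) * (cn + N) * (cp + N))
  end.

Definition beta (a b c d : R) (n : nat) : R :=
  lam a b c d (3 * n) + lam a b c d (3 * n + 1) + lam a b c d (3 * n + 2).

(* alphaS n = alpha_{n+1} *)
Definition alphaS (a b c d : R) (n : nat) : R :=
  (lam a b c d (3 * n + 1) + lam a b c d (3 * n + 2)) * lam a b c d (3 * n + 3)
  + lam a b c d (3 * n + 2) * lam a b c d (3 * n + 4).

(* gammaS n = gamma_{n+1} *)
Definition gammaS (a b c d : R) (n : nat) : R :=
  lam a b c d (3 * n + 2) * lam a b c d (3 * n + 4) * lam a b c d (3 * n + 6).

Definition kappa : R := 4 / 27.

From Stdlib Require Import Reals Lra Lia Arith.
Open Scope R_scope.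

(* For even n = 2x the coefficients beta_n and gamma_n are rational functions of x.
   Clearing denominators, the Toeplitz conditions say that two polynomials in x
   vanish at every positive integer, so all their coefficients vanish; the top ones,
   read off by finite differences at x = 1, force d = c + 1/2, then
   a + b in {2c, 2c - 1}, then a cubic in c and a quadratic in a with the
   twelve tuples as only roots.  Conversely, for those tuples the conditions are
   identities of rational functions of x. *)

Definition lam0 (a b N cn cp : R) : R :=
  N * (b + N - 1) * (cn - a - 1) / ((cn + N - 2) * (cn + N - 1) * (cp + N - 1)).

Definition lam1 (a b N cn cp : R) : R :=
  N * (a + N) * (cp - b) / ((cn + N - 1) * (cp + N - 1) * (cp + N)).

Definition lam2 (a b N cn cp : R) : R :=
  (a + N) * (b + N) * (cn - 1) / ((cn + N - 1) * (cn + N) * (cp + N)).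

Lemma div_mod_3 (n r : nat) :
  (r < 3)%nat -> ((3 * n + r) / 3 = n)%nat /\ ((3 * n + r) mod 3 = r)%nat.
Proof.
  intro hr; split.
  - symmetry; apply (Nat.div_unique _ 3 _ r); lia.
  - symmetry; apply (Nat.mod_unique _ 3 n r); lia.
Qed.

Lemma lam_3n a b c d n : (1 <= n)%nat ->
  lam a b c d (3 * n) = lam0 a b (INR n) (cseq c d n) (cprev c d n).
Proof.
  intro hn; unfold lam.
  destruct (div_mod_3 n 0 ltac:(lia)) as [hq hr]; rewrite Nat.add_0_r in hq, hr.
  rewrite hq, hr; destruct n; [lia | reflexivity].
Qed.

Lemma lam_3n1 a b c d n : (1 <= n)%nat ->
  lam a b c d (3 * n + 1) = lam1 a b (INR n) (cseq c d n) (cprev c d n).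
Proof.
  intro hn; unfold lam.
  destruct (div_mod_3 n 1 ltac:(lia)) as [hq hr]; rewrite hq, hr.
  destruct n; [lia | reflexivity].
Qed.

Lemma lam_3n2 a b c d n :
  lam a b c d (3 * n + 2) = lam2 a b (INR n) (cseq c d n) (cprev c d n).
Proof.
  unfold lam; destruct (div_mod_3 n 2 ltac:(lia)) as [hq hr]; rewrite hq, hr.
  reflexivity.
Qed.

Definition beta_at (a b N cp cn : R) : R :=
  lam0 a b N cn cp + lam1 a b N cn cp + lam2 a b N cn cp.

Definition alpha_at (a b N cp cn cn1 : R) : R :=
  (lam1 a b N cn cp + lam2 a b N cn cp) * lam0 a b (N + 1) cn1 cn
  + lam2 a b N cn cp * lam1 a b (N + 1) cn1 cn.

Definition gamma_at (a b N cp cn cn1 cn2 : R) : R :=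
  lam2 a b N cn cp * lam1 a b (N + 1) cn1 cn * lam0 a b (N + 2) cn2 cn1.

Lemma beta_lam a b c d n : (1 <= n)%nat ->
  beta a b c d n = beta_at a b (INR n) (cprev c d n) (cseq c d n).
Proof. intro hn; unfold beta; rewrite lam_3n, lam_3n1, lam_3n2 by exact hn; reflexivity. Qed.

Lemma alphaS_lam a b c d n : (1 <= n)%nat ->
  alphaS a b c d n
  = alpha_at a b (INR n) (cprev c d n) (cseq c d n) (cseq c d (S n)).
Proof.
  intro hn; unfold alphaS.
  replace (3 * n + 3)%nat with (3 * S n)%nat by lia.
  replace (3 * n + 4)%nat with (3 * S n + 1)%nat by lia.
  rewrite lam_3n1, lam_3n2, lam_3n, lam_3n1, S_INR by lia.
  reflexivity.
Qed.

Lemma gammaS_lam a b c d n : (1 <= n)%nat ->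
  gammaS a b c d n
  = gamma_at a b (INR n) (cprev c d n) (cseq c d n) (cseq c d (S n))
      (cseq c d (S (S n))).
Proof.
  intro hn; unfold gammaS.
  replace (3 * n + 4)%nat with (3 * S n + 1)%nat by lia.
  replace (3 * n + 6)%nat with (3 * S (S n))%nat by lia.
  rewrite lam_3n2, lam_3n1, lam_3n, !S_INR by lia.
  replace (INR n + 1 + 1) with (INR n + 2) by ring.
  reflexivity.
Qed.

Lemma cseq_even c d k : cseq c d (2 * k) = d + INR k.
Proof.
  unfold cseq; rewrite Nat.even_mul; simpl Nat.even; cbv iota.
  now rewrite Nat.div2_double.
Qed.

Lemma cseq_odd c d k : cseq c d (2 * k + 1) = c + INR k + 1.
Proof.
  unfold cseq; rewrite Nat.add_1_r, Nat.even_succ, Nat.odd_mul; simpl Nat.odd; cbv iota.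
  now rewrite Nat.div2_succ_double.
Qed.

Definition beta_fn (a b c d x : R) : R := beta_at a b (2 * x) (c + x) (d + x).

Definition alpha_fn (a b c d x : R) : R :=
  alpha_at a b (2 * x) (c + x) (d + x) (c + x + 1).

Definition gamma_fn (a b c d x : R) : R :=
  gamma_at a b (2 * x) (c + x) (d + x) (c + x + 1) (d + x + 1).

Lemma jacobi_fn a b c d n c' d' x : (1 <= n)%nat ->
  INR n = 2 * x -> cprev c d n = c' + x -> cseq c d n = d' + x ->
  cseq c d (S n) = c' + x + 1 -> cseq c d (S (S n)) = d' + x + 1 ->
  beta a b c d n = beta_fn a b c' d' x /\
  alphaS a b c d n = alpha_fn a b c' d' x /\
  gammaS a b c d n = gamma_fn a b c' d' x.
Proof.
  intros hn hN hp h0 h1 h2.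
  rewrite beta_lam, alphaS_lam, gammaS_lam, hN, hp, h0, h1, h2 by exact hn.
  repeat split.
Qed.

Lemma jacobi_even a b c d k : (1 <= k)%nat ->
  beta a b c d (2 * k) = beta_fn a b c d (INR k) /\
  alphaS a b c d (2 * k) = alpha_fn a b c d (INR k) /\
  gammaS a b c d (2 * k) = gamma_fn a b c d (INR k).
Proof.
  intro hk; apply jacobi_fn; [lia | | | apply cseq_even | |].
  - rewrite mult_INR; reflexivity.
  - destruct k as [|j]; [lia |].
    replace (2 * S j)%nat with (S (2 * j + 1)) by lia.
    change (cprev c d (S (2 * j + 1))) with (cseq c d (2 * j + 1)).
    rewrite cseq_odd, S_INR; ring.
  - rewrite <- Nat.add_1_r; apply cseq_odd.
  - replace (S (S (2 * k))) with (2 * S k)%nat by lia.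
    rewrite cseq_even, S_INR; ring.
Qed.

(* At odd indices the sequence (c_n) follows the even pattern for the pair (d - 1/2, c + 1/2). *)
Lemma jacobi_odd a b c d k :
  beta a b c d (2 * k + 1) = beta_fn a b (d - 1/2) (c + 1/2) (INR k + 1/2) /\
  alphaS a b c d (2 * k + 1) = alpha_fn a b (d - 1/2) (c + 1/2) (INR k + 1/2) /\
  gammaS a b c d (2 * k + 1) = gamma_fn a b (d - 1/2) (c + 1/2) (INR k + 1/2).
Proof.
  apply jacobi_fn; [lia | | | | |].
  - rewrite plus_INR, mult_INR; change (INR 2) with 2; change (INR 1) with 1; lra.
  - rewrite Nat.add_1_r; change (cprev c d (S (2 * k))) with (cseq c d (2 * k)).
    rewrite cseq_even; lra.
  - rewrite cseq_odd; lra.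
  - replace (S (2 * k + 1)) with (2 * S k)%nat by lia.
    rewrite cseq_even, S_INR; lra.
  - replace (S (S (2 * k + 1))) with (2 * S k + 1)%nat by lia.
    rewrite cseq_odd, S_INR; lra.
Qed.

Definition toeplitz_jacobi (a b c d : R) : Prop :=
  forall n : nat, (1 <= n)%nat ->
    beta a b c d n = 3 * kappa /\
    alphaS a b c d n = 3 * kappa ^ 2 /\
    gammaS a b c d n = kappa ^ 3.

Definition toeplitz_tuple (a b c d : R) : Prop :=
    (a, b, c, d) = (1/3, 2/3, 1/2, 1)
 \/ (a, b, c, d) = (2/3, 1/3, 1/2, 1)
 \/ (a, b, c, d) = (1/3, 2/3, 1, 3/2)
 \/ (a, b, c, d) = (2/3, 1/3, 1, 3/2)
 \/ (a, b, c, d) = (2/3, 4/3, 1, 3/2)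
 \/ (a, b, c, d) = (4/3, 2/3, 1, 3/2)
 \/ (a, b, c, d) = (2/3, 4/3, 3/2, 2)
 \/ (a, b, c, d) = (4/3, 2/3, 3/2, 2)
 \/ (a, b, c, d) = (4/3, 5/3, 3/2, 2)
 \/ (a, b, c, d) = (5/3, 4/3, 3/2, 2)
 \/ (a, b, c, d) = (4/3, 5/3, 2, 5/2)
 \/ (a, b, c, d) = (5/3, 4/3, 2, 5/2).

Definition toeplitz_fn (a b c d x : R) : Prop :=
  beta_fn a b c d x = 3 * kappa /\
  alpha_fn a b c d x = 3 * kappa ^ 2 /\
  gamma_fn a b c d x = kappa ^ 3.

Lemma toeplitz_of_fn a b c d : d = c + 1/2 ->
  (forall x, 1/2 <= x -> toeplitz_fn a b c d x) ->
  toeplitz_jacobi a b c d.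
Proof.
  intros hd H n hn.
  destruct (Nat.Even_or_Odd n) as [[k ->] | [k ->]].
  - destruct (jacobi_even a b c d k ltac:(lia)) as (-> & -> & ->).
    apply H; pose proof (le_INR 1 k ltac:(lia)) as h; change (INR 1) with 1 in h; lra.
  - destruct (jacobi_odd a b c d k) as (-> & -> & ->).
    replace (d - 1/2) with c by lra; replace (c + 1/2) with d by lra.
    apply H; pose proof (pos_INR k); lra.
Qed.

Lemma toeplitz_tuple_fn a b c d : toeplitz_tuple a b c d ->
  d = c + 1/2 /\ forall x, 1/2 <= x -> toeplitz_fn a b c d x.
Proof.
  intro Ht; repeat destruct Ht as [Ht | Ht]; injection Ht as -> -> -> ->;
  (split; [lra |]); intros x hx;
  unfold toeplitz_fn, beta_fn, alpha_fn, gamma_fn, beta_at, alpha_at, gamma_at,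
    lam0, lam1, lam2, kappa;
  repeat split; field; repeat split; intro; lra.
Qed.

Fixpoint fdiff (k : nat) (f : R -> R) (x : R) : R :=
  match k with
  | O => f x
  | S k => fdiff k f (x + 1) - fdiff k f x
  end.

Lemma fdiff_eq0 (f : R -> R) :
  (forall n, (1 <= n)%nat -> f (INR n) = 0) ->
  forall k n, (1 <= n)%nat -> fdiff k f (INR n) = 0.
Proof.
  intros hf k; induction k as [|k IH]; intros n hn; simpl.
  - exact (hf n hn).
  - rewrite <- S_INR, IH, IH by lia; ring.
Qed.

Definition beta_poly (a b c d x : R) : R :=
  2 * x * (b + 2 * x - 1) * (d + x - a - 1) * ((d + 3 * x) * (c + 3 * x))
  + 2 * x * (a + 2 * x) * (c + x - b) * ((d + 3 * x - 2) * (d + 3 * x))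
  + (a + 2 * x) * (b + 2 * x) * (d + x - 1) * ((d + 3 * x - 2) * (c + 3 * x - 1))
  - 3 * kappa * ((d + 3 * x - 2) * (d + 3 * x - 1) * (d + 3 * x)
                 * (c + 3 * x - 1) * (c + 3 * x)).

Definition gamma_poly (a b c d x : R) : R :=
  (a + 2 * x) * (b + 2 * x) * (d + x - 1)
  * ((2 * x + 1) * (a + 2 * x + 1) * (d + x - b))
  * ((2 * x + 2) * (b + 2 * x + 1) * (d + x - a))
  - kappa ^ 3 * ((d + 3 * x - 1) * (d + 3 * x) * (c + 3 * x))
    * ((c + 3 * x + 1) * (d + 3 * x) * (d + 3 * x + 1))
    * ((d + 3 * x + 1) * (d + 3 * x + 2) * (c + 3 * x + 2)).

Lemma beta_poly_spec a b c d x : 0 < c -> 0 < d -> 1 <= x ->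
  beta_poly a b c d x
  = (beta_fn a b c d x - 3 * kappa)
    * ((d + 3 * x - 2) * (d + 3 * x - 1) * (d + 3 * x) * (c + 3 * x - 1) * (c + 3 * x)).
Proof.
  intros hc hd hx.
  unfold beta_poly, beta_fn, beta_at, lam0, lam1, lam2.
  field; repeat split; intro; lra.
Qed.

Lemma gamma_poly_spec a b c d x : 0 < c -> 0 < d -> 1 <= x ->
  gamma_poly a b c d x
  = (gamma_fn a b c d x - kappa ^ 3)
    * (((d + 3 * x - 1) * (d + 3 * x) * (c + 3 * x))
       * ((c + 3 * x + 1) * (d + 3 * x) * (d + 3 * x + 1))
       * ((d + 3 * x + 1) * (d + 3 * x + 2) * (c + 3 * x + 2))).
Proof.
  intros hc hd hx.
  unfold gamma_poly, gamma_fn, gamma_at, lam0, lam1, lam2.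
  field; repeat split; intro; lra.
Qed.

Lemma toeplitz_polys_vanish a b c d : 0 < c -> 0 < d -> toeplitz_jacobi a b c d ->
  forall k, fdiff k (beta_poly a b c d) 1 = 0 /\ fdiff k (gamma_poly a b c d) 1 = 0.
Proof.
  intros hc hd H k.
  assert (Hx : forall j, (1 <= j)%nat -> 1 <= INR j) by exact (le_INR 1).
  change 1 with (INR 1); split; apply fdiff_eq0; try lia; intros j hj;
    destruct (jacobi_even a b c d j hj) as (Eb & _ & Eg);
    destruct (H (2 * j)%nat ltac:(lia)) as (hb & _ & hg).
  - rewrite beta_poly_spec, <- Eb, hb by auto; ring.
  - rewrite gamma_poly_spec, <- Eg, hg by auto; ring.
Qed.

Definition beta_coef3 (a b c : R) : R :=
  -27 * a * b + (36 * c - 18) * (a + b) - 36 * c ^ 2 + 18 * c + 6.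

Definition beta_coef2 (a b c : R) : R :=
  -9 * (c + 1) * a * b + (24 * c ^ 2 - 24 * c + 12) * (a + b)
  - 28 * c ^ 3 + 30 * c ^ 2 - 6 * c - 4.

Definition gamma_coef7 (a b c : R) : R :=
  -48 * (a ^ 2 + b ^ 2) + (64 * c + 16) * (a + b) - 64 * c ^ 2 + 32 * c - 64/3.

(* A polynomial of degree k has k-th difference k! times its leading coefficient;
   the lower differences at 1 follow from Newton's forward formula. *)
Lemma beta_poly_fdiff4 a b c d :
  fdiff 4 (beta_poly a b c d) 1 = 288 * (d - c - 1/2).
Proof. cbn [fdiff]; unfold beta_poly, kappa; field. Qed.

Lemma beta_poly_fdiff3 a b c :
  fdiff 3 (beta_poly a b c (c + 1/2)) 1 = 6 * beta_coef3 a b c.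
Proof. cbn [fdiff]; unfold beta_poly, beta_coef3, kappa; field. Qed.

Lemma beta_poly_fdiff2 a b c :
  fdiff 2 (beta_poly a b c (c + 1/2)) 1 = 2 * beta_coef2 a b c + 12 * beta_coef3 a b c.
Proof. cbn [fdiff]; unfold beta_poly, beta_coef2, beta_coef3, kappa; field. Qed.

Lemma gamma_poly_fdiff7 a b c :
  fdiff 7 (gamma_poly a b c (c + 1/2)) 1 = 5040 * gamma_coef7 a b c.
Proof. cbn [fdiff]; unfold gamma_poly, gamma_coef7, kappa; field. Qed.

Lemma sum_ab_cases a b c : beta_coef3 a b c = 0 -> gamma_coef7 a b c = 0 ->
  b = 2 * c - a \/ b = 2 * c - 1 - a.
Proof.
  intros h3 h7.
  assert (E : gamma_coef7 a b c + 32/9 * beta_coef3 a b c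
              = -48 * ((a + b - 2 * c) * (a + b - 2 * c + 1))).
  { unfold gamma_coef7, beta_coef3; field. }
  rewrite h3, h7 in E.
  destruct (Rmult_integral (a + b - 2 * c) (a + b - 2 * c + 1)) as [h | h]; lra.
Qed.

Lemma prod3_eq0 (x y z : R) : x * y * z = 0 -> x = 0 \/ y = 0 \/ z = 0.
Proof.
  intro h; destruct (Rmult_integral _ _ h) as [h' | h']; [| tauto].
  destruct (Rmult_integral _ _ h'); tauto.
Qed.

Lemma tuple4_eq (a b c d a' b' c' d' : R) :
  a = a' -> b = b' -> c = c' -> d = d' -> (a, b, c, d) = (a', b', c', d').
Proof. intros -> -> -> ->; reflexivity. Qed.

Ltac pick_tuple :=
  first [ apply tuple4_eq; lra | left; apply tuple4_eq; lra | right; pick_tuple ].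

Lemma classify_b_2c a c :
  beta_coef3 a (2 * c - a) c = 0 -> beta_coef2 a (2 * c - a) c = 0 ->
  toeplitz_tuple a (2 * c - a) c (c + 1/2).
Proof.
  intros h3 h2.
  assert (Ha : a ^ 2 - 2 * c * a + 4/3 * c ^ 2 - 2/3 * c + 2/9 = 0).
  { unfold beta_coef3 in h3; lra. }
  assert (Hc : (c - 1/2) * (c - 1) * (c - 3/2) = 0).
  { assert (E : beta_coef2 a (2 * c - a) c
                = (c + 1) / 3 * beta_coef3 a (2 * c - a) c
                  + 8 * ((c - 1/2) * (c - 1) * (c - 3/2))).
    { unfold beta_coef2, beta_coef3; field. }
    rewrite h2, h3 in E; lra. }
  destruct (prod3_eq0 _ _ _ Hc) as [hc | [hc | hc]];
  [ assert (Hq : (a - 1/3) * (a - 2/3) = 0) by (replace c with (1/2) in Ha by lra; lra)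
  | assert (Hq : (a - 2/3) * (a - 4/3) = 0) by (replace c with 1 in Ha by lra; lra)
  | assert (Hq : (a - 4/3) * (a - 5/3) = 0) by (replace c with (3/2) in Ha by lra; lra) ];
  destruct (Rmult_integral _ _ Hq); unfold toeplitz_tuple; pick_tuple.
Qed.

Lemma classify_b_2c1 a c :
  beta_coef3 a (2 * c - 1 - a) c = 0 -> beta_coef2 a (2 * c - 1 - a) c = 0 ->
  toeplitz_tuple a (2 * c - 1 - a) c (c + 1/2).
Proof.
  intros h3 h2.
  assert (Ha : a ^ 2 - (2 * c - 1) * a + 4/3 * c ^ 2 - 2 * c + 8/9 = 0).
  { unfold beta_coef3 in h3; lra. }
  assert (Hc : (c - 1) * (c - 3/2) * (c - 2) = 0).
  { assert (E : beta_coef2 a (2 * c - 1 - a) c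
                = (c + 1) / 3 * beta_coef3 a (2 * c - 1 - a) c
                  + 8 * ((c - 1) * (c - 3/2) * (c - 2))).
    { unfold beta_coef2, beta_coef3; field. }
    rewrite h2, h3 in E; lra. }
  destruct (prod3_eq0 _ _ _ Hc) as [hc | [hc | hc]];
  [ assert (Hq : (a - 1/3) * (a - 2/3) = 0) by (replace c with 1 in Ha by lra; lra)
  | assert (Hq : (a - 2/3) * (a - 4/3) = 0) by (replace c with (3/2) in Ha by lra; lra)
  | assert (Hq : (a - 4/3) * (a - 5/3) = 0) by (replace c with 2 in Ha by lra; lra) ];
  destruct (Rmult_integral _ _ Hq); unfold toeplitz_tuple; pick_tuple.
Qed.

Lemma toeplitz_forward a b c d : 0 < c -> 0 < d ->
  toeplitz_jacobi a b c d -> toeplitz_tuple a b c d.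
Proof.
  intros hc hd H.
  pose proof (toeplitz_polys_vanish a b c d hc hd H) as Z.
  assert (Hd : d = c + 1/2).
  { destruct (Z 4%nat) as [h _]; rewrite beta_poly_fdiff4 in h; lra. }
  subst d.
  assert (h3 : beta_coef3 a b c = 0).
  { destruct (Z 3%nat) as [h _]; rewrite beta_poly_fdiff3 in h; lra. }
  assert (h2 : beta_coef2 a b c = 0).
  { destruct (Z 2%nat) as [h _]; rewrite beta_poly_fdiff2, h3 in h; lra. }
  assert (h7 : gamma_coef7 a b c = 0).
  { destruct (Z 7%nat) as [_ h]; rewrite gamma_poly_fdiff7 in h; lra. }
  destruct (sum_ab_cases a b c h3 h7) as [-> | ->].
  - exact (classify_b_2c a c h3 h2).
  - exact (classify_b_2c1 a c h3 h2).
Qed.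

Lemma toeplitz_backward a b c d : toeplitz_tuple a b c d -> toeplitz_jacobi a b c d.
Proof. intro Ht; destruct (toeplitz_tuple_fn a b c d Ht); now apply toeplitz_of_fn. Qed.

Theorem theorem13 (a b c d : R) (ha : 0 < a) (hb : 0 < b) (hc : 0 < c) (hd : 0 < d) :
  (forall n : nat, (1 <= n)%nat ->
      beta a b c d n = 3 * kappa /\
      alphaS a b c d n = 3 * kappa ^ 2 /\
      gammaS a b c d n = kappa ^ 3)
  <->
  ( (a, b, c, d) = (1/3, 2/3, 1/2, 1)
 \/ (a, b, c, d) = (2/3, 1/3, 1/2, 1)
 \/ (a, b, c, d) = (1/3, 2/3, 1, 3/2)
 \/ (a, b, c, d) = (2/3, 1/3, 1, 3/2)
 \/ (a, b, c, d) = (2/3, 4/3, 1, 3/2)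
 \/ (a, b, c, d) = (4/3, 2/3, 1, 3/2)
 \/ (a, b, c, d) = (2/3, 4/3, 3/2, 2)
 \/ (a, b, c, d) = (4/3, 2/3, 3/2, 2)
 \/ (a, b, c, d) = (4/3, 5/3, 3/2, 2)
 \/ (a, b, c, d) = (5/3, 4/3, 3/2, 2)
 \/ (a, b, c, d) = (4/3, 5/3, 2, 5/2)
 \/ (a, b, c, d) = (5/3, 4/3, 2, 5/2) ).
Proof.
  split.
  - exact (toeplitz_forward a b c d hc hd).
  - exact (toeplitz_backward a b c d).
Qed.
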